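(* Let $m$ be a positive integer and $F$ a distribution function with finite $m$-th absolute moment. Then $\mathsf L_{F,m}$ is invertible in $(\mathbb R_m[\mathrm D],\circ)$ and $$\mathsf L_{F,m}^{-1}=\sum_{n=0}^m\Bigl(\sum_{p\in\mathcal P(m,n)}(-1)^{n+p_1}\binom{p_1}{\Delta p}\prod_{k=1}^m\Bigl(\frac{\mu_{F,k}}{k!}\Bigr)^{(\Delta p)_k}\Bigr)\mathrm D^n.$$
   Context: $(\mathbb R_m[\mathrm D],\circ)$ is the ring of polynomials in $\mathrm D$ of degree at most $m$ with multiplication of polynomials modulo $\mathrm D^{m+1}$. $\mu_{F,k}=\int x^k\,dF(x)$ and $\mathsf L_{F,m}=\sum_{k=0}^m\frac{(-1)^k}{k!}\mu_{F,k}\mathrm D^k$. An ordered partition of length $k$ of an integer $n$ is a $k$-tuple of positive integers $p_1\ge\dots\ge p_k>0$ with sum $n$; one sets $p_i=0$ for $i>k$ (the empty partition, of length $0$, is the partition of $n=0$). $\mathcal P(m,n)$ is the set of ordered partitions of $n$ of length at most $m$. For such $p$, $\Delta p=(p_1-p_2,p_2-p_3,\dots,p_m-p_{m+1})$, and for a tuple $k=(k_1,\dots,k_m)$ of nonnegative integers with sum $q$, $\binom{q}{k}=q!/(k_1!\cdots k_m!)$. *)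

From HB Require Import structures.
From mathcomp Require Import all_boot all_order all_algebra.
From mathcomp Require Import all_classical all_reals all_analysis.

Set Implicit Arguments.
Unset Strict Implicit.
Unset Printing Implicit Defensive.
Import Order.TTheory GRing.Theory Num.Theory.

Local Open Scope ring_scope.

Definition dF (R : realType) (F : cumulativeBounded (0:R) (1:R)) :=
  lebesgue_stieltjes_measure F.

Definition moment (R : realType) (F : cumulativeBounded (0:R) (1:R)) (k : nat) : R :=
  Rintegral (dF F) setT (fun x : R => x ^+ k).

Definition finite_abs_moment (R : realType) (F : cumulativeBounded (0:R) (1:R))
    (m : nat) : Prop :=
  (\int[dF F]_x ((`|x| ^+ m)%:E) < +oo)%E.

(* The ring (R_m[D], o): polynomials in D (represented by 'X) of degree <= m,
   product = polynomial product truncated modulo D^(m+1). *)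
Definition trunc_mul (R : nzRingType) (m : nat) (p q : {poly R}) : {poly R} :=
  take_poly m.+1 (p * q).

Definition Lop (R : realType) (F : cumulativeBounded (0:R) (1:R)) (m : nat) : {poly R} :=
  \sum_(k < m.+1) (((-1) ^+ k / (k`!)%:R * moment F k) *: 'X^k).

(* P(m,n): ordered partitions p_1 >= ... >= p_k > 0 of n of length <= m,
   represented as the m-tuple (p_1, ..., p_m) padded with zeros, i.e.
   nonincreasing functions p : 'I_m -> 'I_(n.+1) with sum n.
   (index i : 'I_m stands for p_{i+1}) *)
Definition pval (m n : nat) (p : {ffun 'I_m -> 'I_n.+1}) (i : nat) : nat :=
  if insub i is Some j then nat_of_ord (p j) else 0%N.

Definition is_partition (m n : nat) (p : {ffun 'I_m -> 'I_n.+1}) : bool :=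
  [forall i : 'I_m, pval p i.+1 <= p i]%N && (\sum_(i < m) (p i : nat) == n)%N.

(* p_1 (0 for the empty partition) *)
Definition p1 (m n : nat) (p : {ffun 'I_m -> 'I_n.+1}) : nat := pval p 0.

Definition deltap (m n : nat) (p : {ffun 'I_m -> 'I_n.+1}) (i : 'I_m) : nat :=
  (p i - pval p i.+1)%N.

Definition multinom (m : nat) (q : nat) (k : 'I_m -> nat) : nat :=
  (q`! %/ \prod_(i < m) (k i)`!)%N.

Definition inv_coef (R : realType) (F : cumulativeBounded (0:R) (1:R)) (m n : nat) : R :=
  \sum_(p : {ffun 'I_m -> 'I_n.+1} | is_partition p)
    ((-1) ^+ (n + p1 p) * (multinom (p1 p) (deltap p))%:R *
     \prod_(i < m) ((moment F i.+1 / (i.+1)`!%:R) ^+ deltap p i)).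

Definition Linv (R : realType) (F : cumulativeBounded (0:R) (1:R)) (m : nat) : {poly R} :=
  \sum_(n < m.+1) (inv_coef F m n *: 'X^n).

(* Write L = 1 + A with A = sum_(k >= 1) a_k D^k and a_k = (-1)^k mu_k / k!.
   Modulo D^(m+1), 1/(1 + A) = sum_j (-A)^j; grouping the compositions of n by
   their multiplicity vector d (d_k parts equal to k) gives the coefficient
   c_n = sum_(weight d = n) (-1)^|d| binom(|d|; d) prod_k a_k^(d_k).  Instead of
   expanding powers we check the recursion c_n = - sum_(k=1..n) a_k c_(n-k),
   which is the Pascal rule binom(|d|; d) = sum_k binom(|d| - 1; d - e_k)
   obtained by removing one part.  The map d |-> p with p_i = d_i + ... + d_m
   (p is the conjugate partition) is a bijection from the multiplicity vectors
   of weight n onto P(m, n), with Delta p = d and p_1 = |d|; the sign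
   (-1)^(n + p_1) collects the signs of the a_k.  Truncated multiplication is
   associative, so this right inverse is the unique two-sided inverse. *)

From HB Require Import structures.
From mathcomp Require Import all_boot all_order all_algebra.
From mathcomp Require Import all_classical all_reals all_analysis.
From mathcomp Require Import ring zify.
Import GRing.Theory Num.Theory.

Set Implicit Arguments.
Unset Strict Implicit.
Unset Printing Implicit Defensive.

Section TruncatedProduct.
Variables (R : nzRingType) (m : nat).
Local Open Scope ring_scope.

Lemma take_polyMl n (p q : {poly R}) :
  take_poly n (take_poly n p * q) = take_poly n (p * q).
Proof.
rewrite -[in RHS](poly_take_drop n p) mulrDl take_polyD -mulrA -(commr_polyXn q).
by rewrite mulrA take_polyMXn_0 addr0.
Qed.

Lemma take_polyMr n (p q : {poly R}) :
  take_poly n (p * take_poly n q) = take_poly n (p * q).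
Proof.
by rewrite -[in RHS](poly_take_drop n q) mulrDr take_polyD mulrA take_polyMXn_0 addr0.
Qed.

Lemma trunc_mulA (p q r : {poly R}) :
  trunc_mul m (trunc_mul m p q) r = trunc_mul m p (trunc_mul m q r).
Proof. by rewrite /trunc_mul take_polyMl take_polyMr mulrA. Qed.

Lemma trunc_mul1p (p : {poly R}) : (size p <= m.+1)%N -> trunc_mul m 1 p = p.
Proof. by move=> sp; rewrite /trunc_mul mul1r take_poly_id. Qed.

Lemma trunc_mulp1 (p : {poly R}) : (size p <= m.+1)%N -> trunc_mul m p 1 = p.
Proof. by move=> sp; rewrite /trunc_mul mulr1 take_poly_id. Qed.

Lemma trunc_mul_inv_uniq (p q q' : {poly R}) :
  (size q <= m.+1)%N -> (size q' <= m.+1)%N ->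
  trunc_mul m q p = 1 -> trunc_mul m p q' = 1 -> q = q'.
Proof.
move=> sq sq' qp pq'.
by rewrite -(trunc_mulp1 sq) -pq' -trunc_mulA qp trunc_mul1p.
Qed.

End TruncatedProduct.

Lemma telescope_sumn_nonincr (f : nat -> nat) i M : i <= M -> f M = 0 ->
  (forall k, f k.+1 <= f k) -> \sum_(i <= k < M) (f k - f k.+1) = f i.
Proof.
move=> iM fM fle; rewrite -(subKn iM).
elim: (M - i) (leq_subr i M) => [|k IH] kM; first by rewrite subn0 big_geq.
rewrite big_ltn ?subnSK ?leq_subr // IH 1?ltnW // subnK //.
by rewrite -(subnSK kM) fle.
Qed.

Lemma sum_tail_sums (g : nat -> nat) M :
  \sum_(i < M) \sum_(i <= k < M) g k = \sum_(k < M) k.+1 * g k.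
Proof.
elim: M => [|M IH]; first by rewrite !big_ord0.
rewrite !big_ord_recr /= big_nat1 -IH.
under eq_bigr => i _ do rewrite big_nat_recr 1?ltnW //=.
by rewrite big_split /= sum_nat_const card_ord mulSn [g M + _]addnC addnA.
Qed.

Lemma prod_fact_dvdn m (k : 'I_m -> nat) :
  \prod_(i < m) (k i)`! %| (\sum_(i < m) k i)`!.
Proof.
elim: m k => [|m IH] k; first by rewrite !big_ord0.
rewrite !big_ord_recr /= -(bin_fact (leq_addr (k ord_max) _)) addKn.
by rewrite mulnA dvdn_mul // dvdn_mull.
Qed.

(* [d i] counts the parts equal to [i.+1]; multiplicities are bounded by [m]
   only to get a finite type, which is harmless for weights [<= m]. *)
Notation mvec m := {ffun 'I_m -> 'I_m.+1}.

Section MultiplicityVector.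
Variable m : nat.
Implicit Types (d : mvec m) (i j : 'I_m).

Definition nparts d := \sum_(i < m) d i.
Definition weight d := \sum_(i < m) i.+1 * d i.
Definition mvec_dec d i : mvec m := [ffun j => inord (d j - (j == i))].
Definition mvec_inc d i : mvec m := [ffun j => inord (d j + (j == i))].

Lemma mvec_decE d i j : mvec_dec d i j = d j - (j == i) :> nat.
Proof. by rewrite ffunE inordK // ltnS (leq_trans (leq_subr _ _)) // -ltnS. Qed.

Lemma mvec_incE d i j : d i < m -> mvec_inc d i j = d j + (j == i) :> nat.
Proof.
by move=> dim; rewrite ffunE inordK //; case: eqP => [->|_]; rewrite ?addn1 ?addn0.
Qed.

Lemma mvec_decK d i : 0 < d i -> mvec_inc (mvec_dec d i) i = d.
Proof.
move=> di; have decim : mvec_dec d i i < m by rewrite mvec_decE eqxx subn1 -ltnS prednK.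
apply/ffunP => j; apply: val_inj; rewrite /= mvec_incE // mvec_decE.
by case: eqP => [->|_]; rewrite ?subn0 ?addn0 // subnK.
Qed.

Lemma mvec_incK d i : d i < m -> mvec_dec (mvec_inc d i) i = d.
Proof.
by move=> dim; apply/ffunP => j; apply: val_inj; rewrite /= mvec_decE mvec_incE ?addnK.
Qed.

Lemma big_mvec_dec T (idx : T) (op : Monoid.com_law idx) (F : 'I_m -> nat -> T) d i :
  \big[op/idx]_j F j (mvec_dec d i j) =
  op (F i (d i).-1) (\big[op/idx]_(j | j != i) F j (d j)).
Proof.
rewrite (bigD1 i) //= mvec_decE eqxx subn1; congr (op _ _).
by apply: eq_bigr => j /negPf ji; rewrite mvec_decE ji subn0.
Qed.

Lemma nparts_dec d i : 0 < d i -> (nparts (mvec_dec d i)).+1 = nparts d.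
Proof.
move=> di; rewrite /nparts (big_mvec_dec _ (fun _ k => k)) [in RHS](bigD1 i) //=.
by rewrite -addSn prednK.
Qed.

Lemma weight_dec d i : 0 < d i -> weight (mvec_dec d i) + i.+1 = weight d.
Proof.
move=> di; rewrite /weight (big_mvec_dec _ (fun j k => j.+1 * k)) [in RHS](bigD1 i) //=.
by rewrite -[in RHS](prednK di) mulnS addnAC [i.+1 * _ + _]addnC.
Qed.

Lemma prod_fact_dec d i : 0 < d i ->
  \prod_j (d j)`! = d i * \prod_j (mvec_dec d i j)`!.
Proof.
move=> di; rewrite (big_mvec_dec _ (fun _ k => k`!)) (bigD1 i) //=.
by rewrite -{1}(prednK di) factS prednK // mulnA.
Qed.

Lemma nparts_gt0 d : 0 < weight d -> 0 < nparts d.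
Proof.
rewrite !lt0n; apply: contra; rewrite /nparts sum_nat_eq0 => /forall_inP d0.
by apply/eqP/big1 => i _; rewrite (eqP (d0 i isT)) muln0.
Qed.

Lemma leq_mvec_weight d i : d i <= weight d.
Proof. by rewrite /weight (bigD1 i) //= mulSn -addnA leq_addr. Qed.

Lemma mvec_inc_gt0 d i : d i < m -> 0 < mvec_inc d i i.
Proof. by move=> dim; rewrite mvec_incE // eqxx addn1. Qed.

Lemma weight_inc d i : d i < m -> weight (mvec_inc d i) = weight d + i.+1.
Proof. by move=> dim; rewrite -(weight_dec (mvec_inc_gt0 dim)) mvec_incK. Qed.

End MultiplicityVector.

Section InverseCoefficients.
Variables (R : numFieldType) (m : nat) (a : nat -> R).
Implicit Types (d : mvec m) (i : 'I_m).
Local Open Scope ring_scope.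

Definition mvterm d : R :=
  (-1) ^+ nparts d * ((nparts d)`!%:R / (\prod_(i < m) (d i)`!)%:R) *
  \prod_(i < m) a i.+1 ^+ d i.

Definition mvcoef n : R := \sum_(d : mvec m | weight d == n) mvterm d.

Lemma prod_pow_dec d i : (0 < d i)%N ->
  \prod_(j < m) a j.+1 ^+ d j = a i.+1 * \prod_(j < m) a j.+1 ^+ mvec_dec d i j.
Proof.
move=> di; rewrite (big_mvec_dec _ (fun j k => a j.+1 ^+ k)) (bigD1 i) //=.
by rewrite -{1}(prednK di) exprS mulrA.
Qed.

Lemma prod_fact_neq0 d : (\prod_(i < m) (d i)`!)%:R != 0 :> R.
Proof. by rewrite pnatr_eq0 -lt0n prodn_gt0 // => i; apply: fact_gt0. Qed.

Lemma mvterm_rec d : (0 < nparts d)%N ->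
  mvterm d = - \sum_(i < m | (0 < d i)%N) a i.+1 * mvterm (mvec_dec d i).
Proof.
move=> s_gt0.
pose c := (-1) ^+ (nparts d).-1 * ((nparts d).-1`!%:R / (\prod_(j < m) (d j)`!)%:R) *
  \prod_(j < m) a j.+1 ^+ d j.
have removal i : (0 < d i)%N -> a i.+1 * mvterm (mvec_dec d i) = c * (d i)%:R.
  move=> di; rewrite /c /mvterm -(nparts_dec di) (prod_fact_dec di) (prod_pow_dec di) /=.
  have dn : (d i)%:R != 0 :> R by rewrite pnatr_eq0 -lt0n.
  have Nn := prod_fact_neq0 (mvec_dec d i).
  by rewrite natrM; field; rewrite Nn dn.
have nparts_pos : (\sum_(i < m | (0 < d i)%N) d i)%N = nparts d.
  rewrite /nparts [RHS](bigID (fun i => (0 < d i)%N)) /= [X in (_ + X)%N]big1 ?addn0 //.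
  by move=> i; rewrite lt0n negbK => /eqP.
rewrite (eq_bigr _ removal) -mulr_sumr -natr_sum nparts_pos /c /mvterm.
have Nn := prod_fact_neq0 d.
case: (nparts d) s_gt0 => // s _; rewrite exprS factS natrM /=.
by field.
Qed.

Lemma mvcoef0 : mvcoef 0 = 1.
Proof.
rewrite /mvcoef (big_pred1 [ffun => ord0]) => [|d]; last first.
  apply/eqP/eqP => [/eqP|->]; last by rewrite /weight big1 // => i _; rewrite ffunE muln0.
  rewrite /weight sum_nat_eq0 => /forall_inP d0; apply/ffunP => i; apply: val_inj.
  by have := d0 i isT; rewrite muln_eq0 ffunE => /eqP.
rewrite /mvterm /nparts !big1 => [|i _|i _|i _]; rewrite ?ffunE //.
by rewrite expr0 divr1 !mul1r.
Qed.

Lemma mvcoef_rec n : (0 < n)%N -> (n <= m)%N ->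
  mvcoef n = - \sum_(i < m | (i < n)%N) a i.+1 * mvcoef (n - i.+1)%N.
Proof.
move=> n_gt0 nm; rewrite /mvcoef.
under eq_bigr => d /eqP wd do rewrite mvterm_rec ?nparts_gt0 ?wd //.
rewrite sumrN (exchange_big_dep xpredT) //=; congr (- _).
rewrite (bigID (fun i : 'I_m => (i < n)%N)) /= [X in _ + X]big1 ?addr0 => [|i]; last first.
  rewrite -leqNgt => ni; rewrite big_pred0 // => d; apply/negbTE/andP => -[/eqP wd di].
  by have := weight_dec di; rewrite wd; lia.
apply: eq_bigr => i i_lt_n; rewrite mulr_sumr.
rewrite (reindex_onto (fun d : mvec m => mvec_inc d i) (fun d => mvec_dec d i));
  last by move=> d /andP[_]; apply: mvec_decK.
apply: eq_big => [d|d /andP[_ /eqP ->]] //; apply/idP/idP.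
  case/andP => [/andP[/eqP wd di] /eqP <-].
  by rewrite -wd -(weight_dec di) addnK.
move=> /eqP wd; have dim : (d i < m)%N.
  by apply: leq_ltn_trans (leq_mvec_weight d i) _; rewrite wd; lia.
by rewrite mvec_inc_gt0 // mvec_incK // weight_inc // wd subnK ?eqxx.
Qed.

Lemma mvcoef_conv n : a 0 = 1 -> (n <= m)%N ->
  \sum_(k < n.+1) a k * mvcoef (n - k)%N = (n == 0)%:R.
Proof.
move=> a0 nm; rewrite big_ord_recl subn0 a0 mul1r.
case: n nm => [|n] nm; first by rewrite big_ord0 addr0 mvcoef0.
rewrite mvcoef_rec // -(big_ord_widen _ (fun i : nat => a i.+1 * mvcoef (n.+1 - i.+1)%N) nm).
by under [X in _ + X]eq_bigr => i _ do rewrite lift0; rewrite addNr.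
Qed.

Lemma trunc_mul_mvcoef : a 0 = 1 ->
  trunc_mul m (\poly_(k < m.+1) a k) (\poly_(k < m.+1) mvcoef k) = 1.
Proof.
move=> a0; apply/polyP => n; rewrite coef_take_poly coef1.
case: ltnP => [nm|]; last by case: n.
rewrite coefM -(mvcoef_conv a0 nm); apply: eq_bigr => k _.
by rewrite !coef_poly (leq_ltn_trans (leq_subr _ _) nm) (leq_ltn_trans _ nm) // -ltnS.
Qed.

End InverseCoefficients.

Section PartitionValues.
Variables m n : nat.
Implicit Type p : {ffun 'I_m -> 'I_n.+1}.

Lemma pval_ord p (i : 'I_m) : pval p i = p i.
Proof. by rewrite /pval valK. Qed.

Lemma pval_ge p k : m <= k -> pval p k = 0.
Proof. by move=> mk; rewrite /pval insubF // ltnNge mk. Qed.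

Lemma sum_pval p : \sum_(k < m) pval p k = \sum_(i < m) p i.
Proof. by apply: eq_bigr => i _; rewrite pval_ord. Qed.

Lemma partition_nonincr p : is_partition p -> forall k, pval p k.+1 <= pval p k.
Proof.
case/andP => /forallP p_nonincr _ k; case: (ltnP k m) => [km|mk].
  by rewrite -[k]/(nat_of_ord (Ordinal km)) pval_ord p_nonincr.
by rewrite pval_ge // ltnW.
Qed.

Lemma partition_sum p : is_partition p -> \sum_(k < m) pval p k = n.
Proof. by case/andP => _ /eqP; rewrite sum_pval. Qed.

End PartitionValues.

Lemma weight_pval m (d : mvec m) : weight d = \sum_(k < m) k.+1 * pval d k.
Proof. by apply: eq_bigr => i _; rewrite pval_ord. Qed.

Section PartitionsAndMultiplicities.
Variables m n : nat.
Hypothesis n_le_m : n <= m.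
Local Notation part := {ffun 'I_m -> 'I_n.+1}.

Definition part_of_mvec (d : mvec m) : part :=
  [ffun i : 'I_m => inord (\sum_(i <= k < m) pval d k)].
Definition mvec_of_part (p : part) : mvec m := [ffun i => inord (deltap p i)].

Lemma pval_mvec_of_part p k : pval (mvec_of_part p) k = pval p k - pval p k.+1.
Proof.
case: (ltnP k m) => [km|mk]; last by rewrite !pval_ge // ltnW.
rewrite -[k]/(nat_of_ord (Ordinal km)) pval_ord ffunE inordK ?pval_ord //.
by rewrite ltnS (leq_trans (leq_subr _ _)) // -ltnS (leq_trans (ltn_ord _)).
Qed.

Lemma tail_sum_mvec_of_part p i : is_partition p -> i <= m ->
  \sum_(i <= k < m) pval (mvec_of_part p) k = pval p i.
Proof.
move=> pp im; under eq_bigr => k _ do rewrite pval_mvec_of_part.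
by rewrite telescope_sumn_nonincr //; [apply: pval_ge | apply: partition_nonincr].
Qed.

Lemma mvec_of_partK p : is_partition p -> part_of_mvec (mvec_of_part p) = p.
Proof.
move=> pp; apply/ffunP => i; apply: val_inj.
by rewrite ffunE tail_sum_mvec_of_part 1?ltnW // pval_ord inord_val.
Qed.

Lemma weight_mvec_of_part p : is_partition p -> weight (mvec_of_part p) = n.
Proof.
move=> pp; rewrite weight_pval -sum_tail_sums -[RHS](partition_sum pp).
by apply: eq_bigr => i _; rewrite tail_sum_mvec_of_part 1?ltnW.
Qed.

Section OfWeight.
Variable d : mvec m.
Hypothesis weight_d : weight d = n.

Lemma pval_part_of_mvec j : pval (part_of_mvec d) j = \sum_(j <= k < m) pval d k.
Proof.
case: (ltnP j m) => [jm|mj]; last by rewrite pval_ge // big_geq.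
rewrite -[j]/(nat_of_ord (Ordinal jm)) (pval_ord (part_of_mvec d)) ffunE inordK //.
rewrite ltnS -weight_d.
rewrite weight_pval -(big_mkord xpredT (fun k => k.+1 * pval d k)).
rewrite (big_cat_nat (leq0n j) (ltnW jm)) /=.
by apply/(leq_trans _ (leq_addl _ _))/leq_sum => k _; apply: leq_pmull.
Qed.

Lemma deltap_part_of_mvec i : deltap (part_of_mvec d) i = d i.
Proof.
by rewrite /deltap -pval_ord !pval_part_of_mvec big_ltn // addnK pval_ord.
Qed.

Lemma part_of_mvec_partition : is_partition (part_of_mvec d).
Proof.
apply/andP; split.
  apply/forallP => i; rewrite -(pval_ord (part_of_mvec d)) !pval_part_of_mvec.
  by rewrite [leqRHS]big_ltn ?leq_addl.
rewrite -sum_pval; under eq_bigr => i _ do rewrite pval_part_of_mvec.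
by rewrite sum_tail_sums -weight_pval weight_d.
Qed.

Lemma part_of_mvecK : mvec_of_part (part_of_mvec d) = d.
Proof.
apply/ffunP => i; apply: val_inj.
by rewrite ffunE deltap_part_of_mvec inord_val.
Qed.

Lemma p1_part_of_mvec : p1 (part_of_mvec d) = nparts d.
Proof. by rewrite /p1 pval_part_of_mvec big_mkord sum_pval. Qed.

End OfWeight.

Lemma sum_partitions (R : nmodType) (F : part -> R) :
  (\sum_(p | is_partition p) F p =
   \sum_(d : mvec m | weight d == n) F (part_of_mvec d))%R.
Proof.
rewrite (reindex_onto part_of_mvec mvec_of_part) => [|p pp]; last exact: mvec_of_partK.
apply: eq_bigl => d; apply/andP/eqP => [[pp /eqP <-]|wd].
  by rewrite weight_mvec_of_part.
by rewrite part_of_mvec_partition // part_of_mvecK.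
Qed.

End PartitionsAndMultiplicities.

Local Open Scope ring_scope.

Lemma natr_multinom (R : numFieldType) m q (k : 'I_m -> nat) :
  q = (\sum_(i < m) k i)%N ->
  (multinom q k)%:R = q`!%:R / (\prod_(i < m) (k i)`!)%:R :> R.
Proof.
move=> ->; rewrite natr_div ?prod_fact_dvdn // unitfE pnatr_eq0 -lt0n.
by rewrite prodn_gt0 // => i; apply: fact_gt0.
Qed.

Lemma prod_signed_pow (R : comPzRingType) m (y : nat -> R) (d : mvec m) :
  \prod_(i < m) ((-1) ^+ i.+1 * y i.+1) ^+ d i =
  (-1) ^+ weight d * \prod_(i < m) y i.+1 ^+ d i.
Proof.
by rewrite /weight -prodrXr -big_split; apply: eq_bigr => i _; rewrite exprMn exprM.
Qed.

Lemma sum_partitions_mvcoef (R : numFieldType) m n (a y : nat -> R) :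
  (n <= m)%N -> (forall k, a k = (-1) ^+ k * y k) ->
  \sum_(p : {ffun 'I_m -> 'I_n.+1} | is_partition p)
     ((-1) ^+ (n + p1 p) * (multinom (p1 p) (deltap p))%:R *
      \prod_(i < m) y i.+1 ^+ deltap p i) = mvcoef m a n.
Proof.
move=> nm ay; rewrite sum_partitions //; apply: eq_bigr => d /eqP wd.
rewrite p1_part_of_mvec // (natr_multinom _ (k := deltap (part_of_mvec n d))); last first.
  by apply: eq_bigr => i _; rewrite deltap_part_of_mvec.
under eq_bigr do rewrite deltap_part_of_mvec //.
under [in X in _ * X]eq_bigr do rewrite deltap_part_of_mvec //.
rewrite /mvterm; under [X in _ = _ * X]eq_bigr do rewrite ay.
by rewrite prod_signed_pow wd exprD; ring.
Qed.

Lemma moment0 (R : realType) (F : cumulativeBounded (0:R) (1:R)) : moment F 0 = 1.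
Proof.
rewrite /moment (_ : (fun x : R => x ^+ 0) = fun=> 1); last by apply/funext => x.
by rewrite Rintegral_cst //= /dF probability_setT mul1r.
Qed.

Theorem proposition2p1p2 (R : realType) (m : nat) (F : cumulativeBounded (0:R) (1:R)) :
  (0 < m)%N -> finite_abs_moment F m ->
  (exists Q : {poly R}, (size Q <= m.+1)%N /\
     trunc_mul m (Lop F m) Q = 1 /\ trunc_mul m Q (Lop F m) = 1) /\
  (forall Q : {poly R}, (size Q <= m.+1)%N ->
     trunc_mul m (Lop F m) Q = 1 -> trunc_mul m Q (Lop F m) = 1 -> Q = Linv F m).
Proof.
move=> _ _.
pose a k := (-1) ^+ k / k`!%:R * moment F k.
have a0 : a 0%N = 1 by rewrite /a expr0 fact0 divr1 mul1r moment0.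
have LE : Lop F m = \poly_(k < m.+1) a k by rewrite poly_def.
have QE : Linv F m = \poly_(k < m.+1) mvcoef m a k.
  rewrite poly_def; apply: eq_bigr => n _; congr (_ *: _).
  apply: (sum_partitions_mvcoef (y := fun k => moment F k / k`!%:R)) => [|k].
    by rewrite -ltnS.
  by rewrite /a mulrAC -mulrA.
have LQ : trunc_mul m (Lop F m) (Linv F m) = 1 by rewrite LE QE trunc_mul_mvcoef.
have size_Linv : (size (Linv F m) <= m.+1)%N by rewrite QE size_poly.
split=> [|Q sQ _ QL]; last exact: trunc_mul_inv_uniq sQ size_Linv QL LQ.
by exists (Linv F m); do !split => //; rewrite /trunc_mul mulrC.
Qed.
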